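(* Let $F_1,F_2$ be Minkowski norms on $\mathbb{R}^3$ invariant under the matrices $\mathrm{diag}(1,A)$, $A\in O(2)$, and write $\tfrac12F_1^2=r^2f(t)$, $\tfrac12F_2^2=r^2h(\theta)$ in spherical coordinates. Let $t'$ be the unique solution in $(0,\pi)$ of $\sin t\,f'(t)-2\cos t\,f(t)=0$. Let $y\in S_{F_1}$ have spherical coordinates $(f(t_0)^{-1/2},t_0,0)$ with $t_0\in(0,\pi)\setminus\{\pi/2,t'\}$ and $-\cos t_0\sin t_0\,f''(t_0)+(\cos^2t_0-\sin^2t_0)f'(t_0)\ne0$. Let $\Phi$ be a local Hessian isometry from $F_1$ to $F_2$ defined on an $SO(2)$-invariant conic neighborhood of $y$, of the form $(r,t,\phi)\mapsto\big(f(t)^{1/2}h(\theta(t))^{-1/2}r,\theta(t),\phi\big)$ with $\theta$ smooth, $\theta'\neq 0$. Then exactly one of the following holds for all $t$ sufficiently close to $t_0$: (1) $\theta'(t)=\dfrac{\cos\theta(t)\sin\theta(t)}{\cos t\sin t}$; (2) $\theta'(t)=\dfrac{\big(-2f(t)f''(t)+f'(t)^2-4f(t)^2\big)\cos\theta(t)\sin\theta(t)}{\big(\cos t\,f'(t)+2\sin t\,f(t)\big)\big(\sin t\,f'(t)-2\cos t\,f(t)\big)}$.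
   Context: A Minkowski norm on $\mathbb{R}^3$ is a continuous function $F\ge0$, smooth and positive on $\mathbb{R}^3\setminus\{0\}$, positively $1$-homogeneous, with positive definite Hessian of $E=\tfrac12F^2$ on $\mathbb{R}^3\setminus\{0\}$; its Hessian metric is $g=\mathrm{d}^2E$, its indicatrix $S_F=\{F=1\}$. Spherical coordinates $(r,\theta,\phi)\in\mathbb{R}_{>0}\times(0,\pi)\times\mathbb{R}/2\pi\mathbb{Z}$: $x_1=r\cos\theta$, $x_2=r\sin\theta\cos\phi$, $x_3=r\sin\theta\sin\phi$; the letter $t$ is used for the $\theta$-coordinate on the $F_1$ side. The functions $f,h$ are extended to even $2\pi$-periodic smooth positive functions on $\mathbb{R}$. A local Hessian isometry is a positively $1$-homogeneous diffeomorphism between conic open sets pulling back $g_2$ to $g_1$. *)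

From Stdlib Require Import Reals Lra.
From Coquelicot Require Import Coquelicot.
Open Scope R_scope.

Definition R3 : Type := (R * R * R)%type.
Definition mk3 (a b c : R) : R3 := (a, b, c).
Definition c1 (x : R3) : R := fst (fst x).
Definition c2 (x : R3) : R := snd (fst x).
Definition c3 (x : R3) : R := snd x.
Definition coord (i : nat) (x : R3) : R :=
  match i with 0%nat => c1 x | 1%nat => c2 x | _ => c3 x end.
Definition zero3 : R3 := mk3 0 0 0.
Definition scal3 (l : R) (x : R3) : R3 := mk3 (l * c1 x) (l * c2 x) (l * c3 x).
Definition shift3 (i : nat) (s : R) (x : R3) : R3 :=
  match i with
  | 0%nat => mk3 (c1 x + s) (c2 x) (c3 x)
  | 1%nat => mk3 (c1 x) (c2 x + s) (c3 x)
  | _ => mk3 (c1 x) (c2 x) (c3 x + s)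
  end.

Definition ex_partial (i : nat) (f : R3 -> R) (x : R3) : Prop :=
  ex_derive (fun s => f (shift3 i s x)) 0.
Definition partial (i : nat) (f : R3 -> R) (x : R3) : R :=
  Derive (fun s => f (shift3 i s x)) 0.

Fixpoint Ck (k : nat) (U : R3 -> Prop) (f : R3 -> R) : Prop :=
  match k with
  | 0%nat => forall x, U x -> continuous f x
  | S k' => (forall x, U x -> continuous f x) /\
            forall i, (i < 3)%nat ->
              (forall x, U x -> ex_partial i f x) /\ Ck k' U (partial i f)
  end.
Definition smooth_on (U : R3 -> Prop) (f : R3 -> R) : Prop := forall k, Ck k U f.
Definition smooth_map_on (U : R3 -> Prop) (P : R3 -> R3) : Prop :=
  forall i, (i < 3)%nat -> smooth_on U (fun x => coord i (P x)).

Definition sum3 (g : nat -> R) : R := g 0%nat + g 1%nat + g 2%nat.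

Definition hess (E : R3 -> R) (x u v : R3) : R :=
  sum3 (fun i => sum3 (fun j => partial i (partial j E) x * coord i u * coord j v)).
Definition Efun (F : R3 -> R) (x : R3) : R := / 2 * (F x) ^ 2.
Definition hess_metric (F : R3 -> R) (x u v : R3) : R := hess (Efun F) x u v.

Definition dmap (P : R3 -> R3) (x u : R3) : R3 :=
  let d k := sum3 (fun j => partial j (fun z => coord k (P z)) x * coord j u) in
  mk3 (d 0%nat) (d 1%nat) (d 2%nat).

Definition nonzero3 (x : R3) : Prop := x <> zero3.

Definition minkowski_norm (F : R3 -> R) : Prop :=
  (forall x, continuous F x) /\
  (forall x, 0 <= F x) /\
  smooth_on nonzero3 F /\
  (forall x, nonzero3 x -> 0 < F x) /\
  (forall l x, 0 < l -> F (scal3 l x) = l * F x) /\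
  (forall x u, nonzero3 x -> nonzero3 u -> 0 < hess_metric F x u u).

(** Invariance under diag(1, A), A in O(2) (A = [[a, b], [c, d]], A^T A = I). *)
Definition O2_invariant (F : R3 -> R) : Prop :=
  forall a b c d x1 x2 x3,
    a ^ 2 + c ^ 2 = 1 -> b ^ 2 + d ^ 2 = 1 -> a * b + c * d = 0 ->
    F (mk3 x1 (a * x2 + b * x3) (c * x2 + d * x3)) = F (mk3 x1 x2 x3).

Definition SO2_invariant_set (U : R3 -> Prop) : Prop :=
  forall a x1 x2 x3, U (mk3 x1 x2 x3) ->
    U (mk3 x1 (cos a * x2 - sin a * x3) (sin a * x2 + cos a * x3)).

Definition conic (U : R3 -> Prop) : Prop :=
  (forall x, U x -> nonzero3 x) /\ (forall l x, 0 < l -> U x -> U (scal3 l x)).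

Definition sph (r th ph : R) : R3 :=
  mk3 (r * cos th) (r * sin th * cos ph) (r * sin th * sin ph).

(** The profile function: E(sph r t ph) = r^2 * prof F t (even, 2pi-periodic on R). *)
Definition prof (F : R3 -> R) (t : R) : R := Efun F (sph 1 t 0).

Definition local_hessian_isometry (F1 F2 : R3 -> R) (U : R3 -> Prop) (P : R3 -> R3) : Prop :=
  exists (V : R3 -> Prop) (Q : R3 -> R3),
    open U /\ open V /\ conic U /\ conic V /\
    (forall x, U x -> V (P x)) /\ (forall x, V x -> U (Q x)) /\
    (forall x, U x -> Q (P x) = x) /\ (forall x, V x -> P (Q x) = x) /\
    smooth_map_on U P /\ smooth_map_on V Q /\
    (forall l x, 0 < l -> U x -> P (scal3 l x) = scal3 l (P x)) /\
    (forall x u v, U x ->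
       hess_metric F1 x u v = hess_metric F2 (P x) (dmap P x u) (dmap P x v)).

Definition near_pt (t0 : R) (P : R -> Prop) : Prop :=
  exists eps, 0 < eps /\ forall t, Rabs (t - t0) < eps -> P t.

From Pilot Require Import Defs.
From Stdlib Require Import Reals Lra Lia.
From Coquelicot Require Import Coquelicot.
Open Scope R_scope.

(* We work in the affine chart x2 = 1 of the plane x3 = 0,
   where (z, 1, 0) has polar angle t with z = cot t.  By O(2)-invariance and
   homogeneity E = F^2/2 is determined by the affine profile g(z) = E(z, 1, 0)
   (E_from_aprof), and its Hessian on the plane x3 = 0 is explicit in g, g',
   g'' (HessianInChart).  Phi sends (z, 1, 0) to (M Z, M, 0) with
   Z(z) = cot theta(arccot z) (PhiInChart).  The isometry condition on e1 and
   e3, the relation g1 = M^2 (g2 o Z) and their derivatives give, after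
   elimination, (z Z' - Z) (g1' (2 g1 - z g1') Z' - Z (2 g1 g1'' - g1'^2)) = 0
   (chart_factorization).  Back in t, the factors vanish iff (1), resp. (2),
   holds (factor1_iff, factor2_iff), so one of them holds at every t near t0
   (dichotomy_near); at t0 their right-hand sides differ by the nondegeneracy
   hypothesis (rhs_distinct), and continuity (near_exclusive) shows that
   exactly one of them holds on a whole neighbourhood of t0. *)

(* Derivatives are invariant under translation of the variable; partial
   derivatives are derivatives at 0 of translated functions. *)
Lemma is_derive_of_shift (phi : R -> R) z l :
  is_derive (fun s => phi (z + s)) 0 l -> is_derive phi z l.
Proof.
  intro H.
  assert (H2 : is_derive (fun w => (fun s => phi (z + s)) (w - z)) z (scal 1 l)).
  { apply (is_derive_comp (fun s => phi (z + s)) (fun w => w - z)).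
    - replace (z - z) with 0 by ring. exact H.
    - auto_derive; auto; unfold plus, zero, one; simpl; ring. }
  change (scal 1 l) with (1 * l) in H2. rewrite Rmult_1_l in H2.
  eapply is_derive_ext; [|exact H2]. intro t. simpl. f_equal; ring.
Qed.

Lemma is_derive_shift (phi : R -> R) z l :
  is_derive phi z l -> is_derive (fun s => phi (z + s)) 0 l.
Proof.
  intro H.
  assert (H2 : is_derive (fun s => phi (z + s)) 0 (scal 1 l)).
  { apply (is_derive_comp phi (fun s => z + s)).
    - cbv beta. rewrite Rplus_0_r. exact H.
    - auto_derive; auto; unfold plus, zero, one; simpl; ring. }
  change (scal 1 l) with (1 * l) in H2. rewrite Rmult_1_l in H2. exact H2.
Qed.

Lemma ex_derive_of_shift (phi : R -> R) z :
  ex_derive (fun s => phi (z + s)) 0 -> ex_derive phi z.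
Proof. intros [l H]. exists l. apply is_derive_of_shift; auto. Qed.

Lemma Derive_shift (phi : R -> R) z :
  ex_derive phi z -> Derive (fun s => phi (z + s)) 0 = Derive phi z.
Proof.
  intros [l H]. rewrite (is_derive_unique _ _ _ H).
  apply is_derive_unique. apply is_derive_shift; auto.
Qed.

(* Rewrites eta-expanded functions under Derive back to their names, so that
   the side goals produced by auto_derive match the hypotheses. *)
Ltac eta_Derive := repeat match goal with
  | |- context [Derive (fun x : R => ?f x)] => change (fun x : R => f x) with f
  end.

Lemma locally_of_ball (x eps : R) (P : R -> Prop) :
  0 < eps -> (forall y, Rabs (y - x) < eps -> P y) -> locally x P.
Proof. intros He H. exists (mkposreal eps He). intros y Hy. apply H. exact Hy. Qed.

Lemma locally_in_ball (z z0 eps : R) : Rabs (z - z0) < eps ->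
  locally z (fun w => Rabs (w - z0) < eps).
Proof.
  intro H. apply (locally_of_ball z (eps - Rabs (z - z0))); [lra|].
  intros y Hy. assert (Rabs (y - z0) <= Rabs (y - z) + Rabs (z - z0)).
  { replace (y - z0) with ((y - z) + (z - z0)) by ring. apply Rabs_triang. }
  lra.
Qed.

Lemma locally_in_ball_shift (z z0 eps : R) : Rabs (z - z0) < eps ->
  locally 0 (fun s => Rabs (z + s - z0) < eps).
Proof.
  intro H. apply (locally_of_ball 0 (eps - Rabs (z - z0))); [lra|].
  intros y Hy. rewrite Rminus_0_r in Hy.
  assert (Rabs (z + y - z0) <= Rabs (z - z0) + Rabs y).
  { replace (z + y - z0) with ((z - z0) + y) by ring. apply Rabs_triang. }
  lra.
Qed.

Lemma locally_0_PI t : 0 < t < PI -> locally t (fun u => 0 < u < PI).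
Proof.
  intro Ht. apply (locally_of_ball t (Rmin t (PI - t))).
  - apply Rmin_glb_lt; lra.
  - intros y Hy. apply Rabs_def2 in Hy.
    assert (Rmin t (PI - t) <= t) by apply Rmin_l.
    assert (Rmin t (PI - t) <= PI - t) by apply Rmin_r. lra.
Qed.

Lemma near_pt_and t0 (P Q : R -> Prop) :
  near_pt t0 P -> near_pt t0 Q -> near_pt t0 (fun t => P t /\ Q t).
Proof.
  intros [e1 [He1 H1]] [e2 [He2 H2]]. exists (Rmin e1 e2). split.
  - apply Rmin_glb_lt; auto.
  - intros t Ht. split.
    + apply H1. assert (Rmin e1 e2 <= e1) by apply Rmin_l. lra.
    + apply H2. assert (Rmin e1 e2 <= e2) by apply Rmin_r. lra.
Qed.

Lemma near_pt_imp t0 (P Q : R -> Prop) :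
  (forall t, P t -> Q t) -> near_pt t0 P -> near_pt t0 Q.
Proof. intros HPQ [e [He H]]. exists e. split; auto. Qed.

Lemma near_pt_at t0 (P : R -> Prop) : near_pt t0 P -> P t0.
Proof. intros [e [He H]]. apply H. rewrite Rminus_diag_eq, Rabs_R0; auto. Qed.

Lemma near_pt_continuous (f : R -> R) t0 eps : continuous f t0 -> 0 < eps ->
  near_pt t0 (fun t => Rabs (f t - f t0) < eps).
Proof.
  intros Hc He.
  assert (H : locally (f t0) (fun u => Rabs (u - f t0) < eps))
    by (apply (locally_of_ball (f t0) eps); auto).
  apply Hc in H. destruct H as [d Hd]. exists d. split; [apply cond_pos|].
  intros y Hy. apply Hd. exact Hy.
Qed.

Lemma near_pt_neq (f : R -> R) t0 c : continuous f t0 -> f t0 <> c ->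
  near_pt t0 (fun t => f t <> c).
Proof.
  intros Hc Hne. apply (near_pt_imp t0 (fun t => Rabs (f t - f t0) < Rabs (f t0 - c))).
  - intros t Ht E. rewrite E, Rabs_minus_sym in Ht. lra.
  - apply near_pt_continuous; auto. apply Rabs_pos_lt. lra.
Qed.

Lemma near_pt_interval t0 a b : a < t0 < b -> near_pt t0 (fun t => a < t < b).
Proof.
  intro H. exists (Rmin (t0 - a) (b - t0)). split.
  - apply Rmin_glb_lt; lra.
  - intros t Ht. apply Rabs_def2 in Ht.
    assert (Rmin (t0 - a) (b - t0) <= t0 - a) by apply Rmin_l.
    assert (Rmin (t0 - a) (b - t0) <= b - t0) by apply Rmin_r. lra.
Qed.

Lemma near_exclusive (d r1 r2 : R -> R) t0 :
  continuous d t0 -> continuous r1 t0 -> continuous r2 t0 -> r1 t0 <> r2 t0 ->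
  near_pt t0 (fun t => d t = r1 t \/ d t = r2 t) ->
  (near_pt t0 (fun t => d t = r1 t) /\ ~ near_pt t0 (fun t => d t = r2 t)) \/
  (near_pt t0 (fun t => d t = r2 t) /\ ~ near_pt t0 (fun t => d t = r1 t)).
Proof.
  intros Hd H1 H2 Hne Hdisj.
  assert (Hdiff : forall r, continuous r t0 -> d t0 <> r t0 ->
    near_pt t0 (fun t => d t <> r t)).
  { intros r Hr Hdr.
    apply (near_pt_imp t0 (fun t => d t - r t <> 0)); [intros t Ht E; lra|].
    apply near_pt_neq; [|lra]. apply (continuous_minus d r); auto. }
  destruct (Req_dec (d t0) (r1 t0)) as [E|E]; [left|right]; split.
  - apply (near_pt_imp t0 (fun t => (d t = r1 t \/ d t = r2 t) /\ d t <> r2 t)).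
    + intros t [[A|A] B]; tauto.
    + apply near_pt_and; auto. apply Hdiff; auto. lra.
  - intro N2. apply Hne. rewrite <- E. apply (near_pt_at t0 _ N2).
  - apply (near_pt_imp t0 (fun t => (d t = r1 t \/ d t = r2 t) /\ d t <> r1 t)).
    + intros t [[A|A] B]; tauto.
    + apply near_pt_and; auto.
  - intro N1. apply E. apply (near_pt_at t0 _ N1).
Qed.

Lemma Ck_S_partial k U f i : (i < 3)%nat -> Ck (S k) U f -> Ck k U (partial i f).
Proof. intros Hi [_ H]. apply (H i Hi). Qed.

Lemma Ck_ex_partial k U f i x : (i < 3)%nat -> Ck (S k) U f -> U x -> ex_partial i f x.
Proof. intros Hi [_ H] Hx. apply (H i Hi); auto. Qed.

Fixpoint iter_partial0 (n : nat) (F : R3 -> R) : R3 -> R :=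
  match n with 0%nat => F | S m => partial 0 (iter_partial0 m F) end.

Lemma smooth_iter_partial0 U F :
  smooth_on U F -> forall n k, Ck k U (iter_partial0 n F).
Proof.
  intros H n; induction n; intro k; simpl; [apply H|].
  apply Ck_S_partial; [lia| apply IHn].
Qed.

Lemma nonzero_line z : nonzero3 (mk3 z 1 0).
Proof. unfold nonzero3, mk3, zero3. intro H. injection H. lra. Qed.

Lemma Derive_n_line F : smooth_on nonzero3 F -> forall n z,
  Derive_n (fun w => F (mk3 w 1 0)) n z = iter_partial0 n F (mk3 z 1 0) /\
  ex_derive (Derive_n (fun w => F (mk3 w 1 0)) n) z.
Proof.
  intros HF n. induction n as [|n IHn]; intro z.
  - split; [reflexivity|]. simpl. apply ex_derive_of_shift.
    apply (Ck_ex_partial 0 nonzero3 F 0 (mk3 z 1 0)); [lia| apply HF | apply nonzero_line].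
  - assert (Hex : forall w, ex_derive (fun w => iter_partial0 n F (mk3 w 1 0)) w).
    { intro w. apply ex_derive_of_shift.
      apply (Ck_ex_partial 0 nonzero3 (iter_partial0 n F) 0 (mk3 w 1 0));
        [lia| apply smooth_iter_partial0; auto | apply nonzero_line]. }
    assert (Heq : forall w, Derive_n (fun w => F (mk3 w 1 0)) (S n) w =
                            iter_partial0 (S n) F (mk3 w 1 0)).
    { intro w. simpl Derive_n.
      rewrite (Derive_ext _ (fun w => iter_partial0 n F (mk3 w 1 0)) _ (fun w => proj1 (IHn w))).
      simpl iter_partial0.
      change (partial 0 (iter_partial0 n F) (mk3 w 1 0)) with
        (Derive (fun s => iter_partial0 n F (mk3 (w + s) 1 0)) 0).
      symmetry. apply (Derive_shift (fun w => iter_partial0 n F (mk3 w 1 0))). apply Hex. }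
    split; [apply Heq|].
    apply (ex_derive_ext (fun w => iter_partial0 (S n) F (mk3 w 1 0))); [intro; symmetry; apply Heq|].
    apply ex_derive_of_shift.
    apply (Ck_ex_partial 0 nonzero3 (iter_partial0 (S n) F) 0 (mk3 z 1 0));
      [lia| apply smooth_iter_partial0; auto | apply nonzero_line].
Qed.

Definition C3 (g : R -> R) : Prop := forall z,
  ex_derive g z /\ ex_derive (Derive g) z /\ ex_derive (Derive (Derive g)) z.

Definition aprof (F : R3 -> R) (z : R) : R := Efun F (mk3 z 1 0).

Lemma aprof_C3 F : smooth_on nonzero3 F -> C3 (aprof F).
Proof.
  intro HF. set (phi := fun w => F (mk3 w 1 0)).
  assert (E0 : forall z, ex_derive phi z) by (intro z; apply (Derive_n_line F HF 0 z)).
  assert (E1 : forall z, ex_derive (Derive phi) z) by (intro z; apply (Derive_n_line F HF 1 z)).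
  assert (E2 : forall z, ex_derive (Derive (Derive phi)) z)
    by (intro z; apply (Derive_n_line F HF 2 z)).
  assert (E3 : forall z, ex_derive (Derive (Derive (Derive phi))) z)
    by (intro z; apply (Derive_n_line F HF 3 z)).
  assert (Hg : forall z, aprof F z = / 2 * phi z ^ 2) by reflexivity.
  assert (D1 : forall z, Derive (aprof F) z = phi z * Derive phi z).
  { intro z. rewrite (Derive_ext _ _ _ Hg). apply is_derive_unique.
    auto_derive; auto. eta_Derive. field. }
  assert (D2 : forall z, Derive (Derive (aprof F)) z =
     Derive phi z * Derive phi z + phi z * Derive (Derive phi) z).
  { intro z. rewrite (Derive_ext _ _ _ D1). apply is_derive_unique.
    auto_derive; auto. eta_Derive. ring. }
  intro z. split; [|split].
  - apply (ex_derive_ext (fun z => / 2 * phi z ^ 2)); [intro; symmetry; apply Hg|].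
    auto_derive. auto.
  - apply (ex_derive_ext (fun z => phi z * Derive phi z)); [intro; symmetry; apply D1|].
    auto_derive. auto.
  - apply (ex_derive_ext (fun z => Derive phi z * Derive phi z + phi z * Derive (Derive phi) z));
      [intro; symmetry; apply D2|].
    auto_derive. auto.
Qed.

Section HessianInChart.
Variables (E : R3 -> R) (g : R -> R).
Hypothesis HE : forall a b c, 0 < b -> E (mk3 a b c) = (b^2 + c^2) * g (a / sqrt (b^2 + c^2)).
Hypothesis Hg : C3 g.
Let ex_g0 z : ex_derive g z := proj1 (Hg z).
Let ex_g1 z : ex_derive (Derive g) z := proj1 (proj2 (Hg z)).

Ltac side := repeat match goal with |- _ /\ _ => split end;
  try exact I; try apply ex_g0; try apply ex_g1; try lra; try nra.

Lemma E_plane a b : 0 < b -> E (mk3 a b 0) = b^2 * g (a / b).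
Proof.
  intro Hb. rewrite HE by auto. replace (b^2 + 0^2) with (b^2) by ring.
  rewrite sqrt_pow2 by lra. reflexivity.
Qed.

Lemma locally_x2_pos b : 0 < b -> locally 0 (fun s => 0 < b + s).
Proof.
  intro Hb. apply (locally_of_ball 0 b); auto. intros y Hy.
  rewrite Rminus_0_r in Hy. apply Rabs_def2 in Hy. lra.
Qed.

Lemma dE1_plane a b : 0 < b -> partial 0 E (mk3 a b 0) = b * Derive g (a / b).
Proof.
  intro Hb. change (partial 0 E (mk3 a b 0)) with (Derive (fun s => E (mk3 (a+s) b 0)) 0).
  rewrite (Derive_ext _ (fun s => b^2 * g ((a+s)/b))) by (intro; apply E_plane; auto).
  apply is_derive_unique. auto_derive; [apply ex_g0|]. eta_Derive.
  unfold Rdiv. rewrite Rplus_0_r. field. lra.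
Qed.

Lemma dE2_plane a b : 0 < b ->
  partial 1 E (mk3 a b 0) = 2 * b * g (a / b) - a * Derive g (a / b).
Proof.
  intro Hb. change (partial 1 E (mk3 a b 0)) with (Derive (fun s => E (mk3 a (b+s) 0)) 0).
  rewrite (Derive_ext_loc _ (fun s => (b+s)^2 * g (a/(b+s)))).
  2:{ generalize (locally_x2_pos b Hb). apply filter_imp. intros y Hy. apply E_plane; auto. }
  apply is_derive_unique. auto_derive; [side|]. eta_Derive.
  unfold Rdiv. rewrite Rplus_0_r. field. lra.
Qed.

Lemma dE3 a b s : 0 < b -> partial 2 E (mk3 a b s) =
  s * (2 * g (a / sqrt (b^2 + s^2)) - a / sqrt (b^2 + s^2) * Derive g (a / sqrt (b^2 + s^2))).
Proof.
  intro Hb. change (partial 2 E (mk3 a b s)) with (Derive (fun s' => E (mk3 a b (s + s'))) 0).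
  rewrite (Derive_ext _ (fun s' => (b^2 + (s+s')^2) * g (a / sqrt (b^2 + (s+s')^2))))
    by (intro; apply HE; auto).
  assert (Hq : 0 < b^2 + s^2) by nra.
  apply is_derive_unique. auto_derive.
  { rewrite Rplus_0_r. repeat split; try nra; [apply ex_g0|]. intro Hs.
    apply sqrt_eq_0 in Hs; nra. }
  eta_Derive. rewrite !Rplus_0_r.
  assert (Hr := sqrt_sqrt (b^2 + s^2) (Rlt_le _ _ Hq)).
  assert (Hrp := sqrt_lt_R0 _ Hq).
  set (r := sqrt (b^2+s^2)) in *.
  replace (b * (b * 1) + s * (s * 1)) with (r * r) by (rewrite Hr; ring).
  rewrite sqrt_square by lra. unfold Rdiv. field. lra.
Qed.

Lemma hess11_plane a b : 0 < b ->
  partial 0 (partial 0 E) (mk3 a b 0) = Derive (Derive g) (a / b).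
Proof.
  intro Hb. change (partial 0 (partial 0 E) (mk3 a b 0)) with
    (Derive (fun s => partial 0 E (mk3 (a+s) b 0)) 0).
  rewrite (Derive_ext _ (fun s => b * Derive g ((a+s)/b))) by (intro; apply dE1_plane; auto).
  apply is_derive_unique. auto_derive; [side|]. eta_Derive.
  unfold Rdiv. rewrite Rplus_0_r. field. lra.
Qed.

Lemma hess12_plane a b : 0 < b -> partial 0 (partial 1 E) (mk3 a b 0) =
  Derive g (a / b) - a / b * Derive (Derive g) (a / b).
Proof.
  intro Hb. change (partial 0 (partial 1 E) (mk3 a b 0)) with
    (Derive (fun s => partial 1 E (mk3 (a+s) b 0)) 0).
  rewrite (Derive_ext _ (fun s => 2 * b * g ((a+s)/b) - (a+s) * Derive g ((a+s)/b)))
    by (intro; apply dE2_plane; auto).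
  apply is_derive_unique. auto_derive; [side|]. eta_Derive.
  unfold Rdiv. rewrite Rplus_0_r. field. lra.
Qed.

Lemma hess21_plane a b : 0 < b -> partial 1 (partial 0 E) (mk3 a b 0) =
  Derive g (a / b) - a / b * Derive (Derive g) (a / b).
Proof.
  intro Hb. change (partial 1 (partial 0 E) (mk3 a b 0)) with
    (Derive (fun s => partial 0 E (mk3 a (b+s) 0)) 0).
  rewrite (Derive_ext_loc _ (fun s => (b+s) * Derive g (a/(b+s)))).
  2:{ generalize (locally_x2_pos b Hb). apply filter_imp. intros y Hy. apply dE1_plane; auto. }
  apply is_derive_unique. auto_derive; [side|]. eta_Derive.
  unfold Rdiv. rewrite Rplus_0_r. field. lra.
Qed.

Lemma hess22_plane a b : 0 < b -> partial 1 (partial 1 E) (mk3 a b 0) =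
  2 * g (a / b) - 2 * (a / b) * Derive g (a / b) + (a / b)^2 * Derive (Derive g) (a / b).
Proof.
  intro Hb. change (partial 1 (partial 1 E) (mk3 a b 0)) with
    (Derive (fun s => partial 1 E (mk3 a (b+s) 0)) 0).
  rewrite (Derive_ext_loc _ (fun s => 2 * (b+s) * g (a/(b+s)) - a * Derive g (a/(b+s)))).
  2:{ generalize (locally_x2_pos b Hb). apply filter_imp. intros y Hy. apply dE2_plane; auto. }
  apply is_derive_unique. auto_derive; [side|]. eta_Derive.
  unfold Rdiv. rewrite Rplus_0_r. field. lra.
Qed.

Lemma hess33_plane a b : 0 < b -> partial 2 (partial 2 E) (mk3 a b 0) =
  2 * g (a / b) - a / b * Derive g (a / b).
Proof.
  intro Hb. change (partial 2 (partial 2 E) (mk3 a b 0)) with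
    (Derive (fun s => partial 2 E (mk3 a b (0 + s))) 0).
  rewrite (Derive_ext _ (fun s => (0+s) * (2 * g (a / sqrt (b^2 + (0+s)^2)) -
     a / sqrt (b^2 + (0+s)^2) * Derive g (a / sqrt (b^2 + (0+s)^2)))))
    by (intro; apply dE3; auto).
  apply is_derive_unique. auto_derive.
  { rewrite !Rplus_0_l. repeat split; try nra; try apply ex_g0; try apply ex_g1;
    intro Hs; apply sqrt_eq_0 in Hs; nra. }
  eta_Derive. rewrite !Rplus_0_l, !Rmult_0_l, Rplus_0_r.
  replace (b * (b * 1) + 0) with (b * b) by ring. rewrite sqrt_square by lra.
  unfold Rdiv. ring.
Qed.
End HessianInChart.

Lemma hess_e1 E x : hess E x (mk3 1 0 0) (mk3 1 0 0) = partial 0 (partial 0 E) x.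
Proof. unfold hess, sum3. cbv [coord Defs.c1 Defs.c2 Defs.c3 mk3 fst snd]. ring. Qed.
Lemma hess_e3 E x : hess E x (mk3 0 0 1) (mk3 0 0 1) = partial 2 (partial 2 E) x.
Proof. unfold hess, sum3. cbv [coord Defs.c1 Defs.c2 Defs.c3 mk3 fst snd]. ring. Qed.
Lemma hess_plane_vector E x v0 v1 : hess E x (mk3 v0 v1 0) (mk3 v0 v1 0) =
  partial 0 (partial 0 E) x * v0 * v0 + partial 0 (partial 1 E) x * v0 * v1 +
  partial 1 (partial 0 E) x * v1 * v0 + partial 1 (partial 1 E) x * v1 * v1.
Proof. unfold hess, sum3. cbv [coord Defs.c1 Defs.c2 Defs.c3 mk3 fst snd]. ring. Qed.
Lemma hess_axis3_vector E x c :
  hess E x (mk3 0 0 c) (mk3 0 0 c) = partial 2 (partial 2 E) x * c * c.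
Proof. unfold hess, sum3. cbv [coord Defs.c1 Defs.c2 Defs.c3 mk3 fst snd]. ring. Qed.
Lemma dmap_e1 P x : dmap P x (mk3 1 0 0) =
  mk3 (partial 0 (fun z => coord 0 (P z)) x) (partial 0 (fun z => coord 1 (P z)) x)
      (partial 0 (fun z => coord 2 (P z)) x).
Proof.
  unfold dmap, sum3. cbv [coord Defs.c1 Defs.c2 Defs.c3 mk3 fst snd].
  f_equal; [f_equal|]; ring.
Qed.
Lemma dmap_e3 P x : dmap P x (mk3 0 0 1) =
  mk3 (partial 2 (fun z => coord 0 (P z)) x) (partial 2 (fun z => coord 1 (P z)) x)
      (partial 2 (fun z => coord 2 (P z)) x).
Proof.
  unfold dmap, sum3. cbv [coord Defs.c1 Defs.c2 Defs.c3 mk3 fst snd].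
  f_equal; [f_equal|]; ring.
Qed.

Lemma E_hom F l x : minkowski_norm F -> 0 < l -> Efun F (scal3 l x) = l^2 * Efun F x.
Proof. intros (_&_&_&_&Hh&_) Hl. unfold Efun. rewrite Hh by auto. ring. Qed.

Lemma E_pos F x : minkowski_norm F -> nonzero3 x -> 0 < Efun F x.
Proof. intros (_&_&_&Hp&_&_) Hx. unfold Efun. specialize (Hp x Hx). nra. Qed.

(* By O(2)-invariance and 2-homogeneity, E is determined by its affine
   profile: E(a, b, c) = (b^2 + c^2) g(a / sqrt (b^2 + c^2)) for b > 0. *)
Lemma E_from_aprof F : minkowski_norm F -> O2_invariant F -> forall a b c, 0 < b ->
  Efun F (mk3 a b c) = (b^2 + c^2) * aprof F (a / sqrt (b^2 + c^2)).
Proof.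
  intros HF HO a b c Hb.
  assert (Hq : 0 < b^2 + c^2) by nra.
  assert (Hr := sqrt_sqrt (b^2 + c^2) (Rlt_le _ _ Hq)).
  assert (Hrp := sqrt_lt_R0 _ Hq).
  set (r := sqrt (b^2+c^2)) in *.
  assert (Hrot : Efun F (mk3 a b c) = Efun F (mk3 a r 0)).
  { unfold Efun. rewrite <- (HO (b/r) (-c/r) (c/r) (b/r) a r 0).
    - do 3 f_equal. unfold mk3. f_equal; [f_equal|]; field; lra.
    - replace ((b/r)^2 + (c/r)^2) with ((b^2+c^2)/(r*r)) by (field; lra). rewrite Hr. field. lra.
    - replace ((-c/r)^2 + (b/r)^2) with ((b^2+c^2)/(r*r)) by (field; lra). rewrite Hr. field. lra.
    - field. lra. }
  rewrite Hrot.
  replace (mk3 a r 0) with (scal3 r (mk3 (a / r) 1 0)).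
  - rewrite E_hom by auto. rewrite <- Hr. unfold aprof. ring.
  - unfold scal3, mk3, Defs.c1, Defs.c2, Defs.c3. simpl. f_equal; [f_equal|]; field; lra.
Qed.

Lemma aprof_pos F z : minkowski_norm F -> 0 < aprof F z.
Proof. intro HF. apply E_pos; auto. apply nonzero_line. Qed.

Lemma nonzero_e1 : nonzero3 (mk3 1 0 0).
Proof. unfold nonzero3, mk3, zero3. intro H. injection H. lra. Qed.
Lemma nonzero_e3 : nonzero3 (mk3 0 0 1).
Proof. unfold nonzero3, mk3, zero3. intro H. injection H. lra. Qed.

(* Positive definiteness of the Hessian in the directions e1 and e3 at
   (z, 1, 0): the affine profile is strictly convex and 2g - z g' > 0. *)
Lemma aprof_convex F : minkowski_norm F -> O2_invariant F ->
  forall z, 0 < Derive (Derive (aprof F)) z.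
Proof.
  intros HF HO z. assert (HC := aprof_C3 F (proj1 (proj2 (proj2 HF)))).
  assert (HE := E_from_aprof F HF HO).
  destruct HF as (_&_&_&_&_&Hh).
  specialize (Hh (mk3 z 1 0) (mk3 1 0 0) (nonzero_line z) nonzero_e1).
  unfold hess_metric in Hh.
  rewrite hess_e1, (hess11_plane (Efun F) (aprof F) HE HC z 1 Rlt_0_1) in Hh.
  replace (z / 1) with z in Hh by field. exact Hh.
Qed.

Lemma aprof_transverse F : minkowski_norm F -> O2_invariant F ->
  forall z, 0 < 2 * aprof F z - z * Derive (aprof F) z.
Proof.
  intros HF HO z. assert (HC := aprof_C3 F (proj1 (proj2 (proj2 HF)))).
  assert (HE := E_from_aprof F HF HO).
  destruct HF as (_&_&_&_&_&Hh).
  specialize (Hh (mk3 z 1 0) (mk3 0 0 1) (nonzero_line z) nonzero_e3).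
  unfold hess_metric in Hh.
  rewrite hess_e3, (hess33_plane (Efun F) (aprof F) HE HC z 1 Rlt_0_1) in Hh.
  replace (z / 1) with z in Hh by field. exact Hh.
Qed.

Lemma Derive_injective_of_convex (g : R -> R) : C3 g -> (forall z, 0 < Derive (Derive g) z) ->
  forall a b, Derive g a = Derive g b -> a = b.
Proof.
  intros Hg Hp.
  assert (K : forall a b, a < b -> Derive g a = Derive g b -> False).
  { intros a b Hab E.
    destruct (MVT_gen (Derive g) a b (Derive (Derive g))) as [c [_ Hc]].
    - intros x _. apply Derive_correct. apply Hg.
    - intros x _. apply continuity_pt_filterlim.
      exact (ex_derive_continuous (Derive g) x (proj1 (proj2 (Hg x)))).
    - rewrite E in Hc. specialize (Hp c). nra. }
  intros a b E. destruct (Rtotal_order a b) as [H|[H|H]]; auto.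
  - exfalso; apply (K a b); auto.
  - exfalso; apply (K b a); auto.
Qed.

Lemma sin_cos_sq t : sin t ^ 2 + cos t ^ 2 = 1.
Proof. assert (H := sin2_cos2 t). unfold Rsqr in H. rewrite <- H. ring. Qed.

Definition arccot (w : R) : R := PI / 2 - atan w.

Lemma sqrt1p_pos w : 0 < sqrt (1 + w^2).
Proof. apply sqrt_lt_R0. nra. Qed.

Lemma arccot_bound w : 0 < arccot w < PI.
Proof. unfold arccot. assert (H := atan_bound w). split; lra. Qed.

Lemma cos_arccot w : cos (arccot w) = w / sqrt (1 + w^2).
Proof.
  unfold arccot. rewrite cos_shift, sin_atan. unfold Rsqr.
  replace (w*w) with (w^2) by ring. reflexivity.
Qed.

Lemma sin_arccot w : sin (arccot w) = 1 / sqrt (1 + w^2).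
Proof.
  unfold arccot. rewrite sin_shift, cos_atan. unfold Rsqr.
  replace (w*w) with (w^2) by ring. reflexivity.
Qed.

Lemma cos_atan_sq s : cos (atan s) = 1 / sqrt (1 + s^2).
Proof. rewrite cos_atan. unfold Rsqr. replace (s*s) with (s^2) by ring. reflexivity. Qed.
Lemma sin_atan_sq s : sin (atan s) = s / sqrt (1 + s^2).
Proof. rewrite sin_atan. unfold Rsqr. replace (s*s) with (s^2) by ring. reflexivity. Qed.

Lemma cot_arccot w : cos (arccot w) / sin (arccot w) = w.
Proof. rewrite cos_arccot, sin_arccot. assert (H := sqrt1p_pos w). field. lra. Qed.

Lemma arccot_cot t : 0 < t < PI -> arccot (cos t / sin t) = t.
Proof.
  intro Ht. unfold arccot.
  replace (cos t / sin t) with (tan (PI / 2 - t)).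
  - rewrite atan_tan; [ring | split; lra].
  - unfold tan. rewrite sin_shift, cos_shift. reflexivity.
Qed.

Lemma cos_zero_pi2 t : 0 < t < PI -> cos t = 0 -> t = PI / 2.
Proof.
  intros Ht Hc. rewrite <- (arccot_cot t Ht). rewrite Hc. unfold Rdiv. rewrite Rmult_0_l.
  unfold arccot. rewrite atan_0. lra.
Qed.

Lemma sph_chart z s : sph (sqrt (1 + s^2) * sqrt (1 + (z / sqrt (1 + s^2))^2))
   (arccot (z / sqrt (1 + s^2))) (atan s) = mk3 z 1 s.
Proof.
  assert (Hl := sqrt1p_pos s). set (w := z / sqrt (1 + s^2)).
  assert (Hw := sqrt1p_pos w).
  unfold sph. rewrite cos_arccot, sin_arccot, cos_atan_sq, sin_atan_sq.
  unfold mk3. f_equal; [f_equal|].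
  - transitivity (sqrt (1 + s^2) * w); [field; lra|]. unfold w. field. lra.
  - field. lra.
  - field. lra.
Qed.

Lemma sph_arccot z : sph 1 (arccot z) 0 = scal3 (/ sqrt (1 + z^2)) (mk3 z 1 0).
Proof.
  assert (H := sqrt1p_pos z). unfold sph. cbv [scal3 mk3 Defs.c1 Defs.c2 Defs.c3 fst snd].
  rewrite cos_arccot, sin_arccot, cos_0, sin_0. f_equal; [f_equal|]; field; lra.
Qed.

Lemma prof_aprof F t : minkowski_norm F -> 0 < t < PI ->
  prof F t = sin t ^ 2 * aprof F (cos t / sin t).
Proof.
  intros HF Ht. assert (Hs := sin_gt_0 t (proj1 Ht) (proj2 Ht)).
  unfold prof, aprof. rewrite <- E_hom by auto. f_equal.
  unfold sph, scal3, mk3, Defs.c1, Defs.c2, Defs.c3. simpl. rewrite cos_0, sin_0.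
  f_equal; [f_equal|]; field; lra.
Qed.

Lemma prof_pos F t : minkowski_norm F -> 0 < prof F t.
Proof.
  intro HF. apply E_pos; auto. unfold nonzero3, sph, mk3, zero3. intro H.
  injection H. intros Hc Hb Ha. assert (H2 := sin2_cos2 t). unfold Rsqr in H2.
  rewrite cos_0 in Hb. nra.
Qed.

Section ProfileDerivatives.
Variables (p g : R -> R).
Hypothesis Hg : C3 g.
Hypothesis Hp : forall t, 0 < t < PI -> p t = sin t ^ 2 * g (cos t / sin t).
Let ex_g0 z : ex_derive g z := proj1 (Hg z).
Let ex_g1 z : ex_derive (Derive g) z := proj1 (proj2 (Hg z)).
Let ex_g2 z : ex_derive (Derive (Derive g)) z := proj2 (proj2 (Hg z)).

Lemma profile_D1 t : 0 < t < PI ->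
  Derive p t = 2 * sin t * cos t * g (cos t / sin t) - Derive g (cos t / sin t).
Proof.
  intro Ht. assert (Hs := sin_gt_0 t (proj1 Ht) (proj2 Ht)).
  rewrite (Derive_ext_loc _ (fun u => sin u ^ 2 * g (cos u / sin u))).
  2:{ generalize (locally_0_PI t Ht). apply filter_imp. intros u Hu. apply Hp; auto. }
  replace (Derive g (cos t / sin t)) with
    ((sin t ^2 + cos t ^ 2) * Derive g (cos t / sin t)) by (rewrite sin_cos_sq; ring).
  apply is_derive_unique. auto_derive.
  { repeat split; try apply ex_g0; lra. }
  eta_Derive. unfold Rdiv. field. lra.
Qed.

Lemma profile_D2 t : 0 < t < PI ->
  Derive (Derive p) t = 2 * (cos t ^ 2 - sin t ^ 2) * g (cos t / sin t)
     - 2 * (cos t / sin t) * Derive g (cos t / sin t)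
     + Derive (Derive g) (cos t / sin t) / sin t ^ 2.
Proof.
  intro Ht. assert (Hs := sin_gt_0 t (proj1 Ht) (proj2 Ht)).
  rewrite (Derive_ext_loc _
    (fun u => 2 * sin u * cos u * g (cos u / sin u) - Derive g (cos u / sin u))).
  2:{ generalize (locally_0_PI t Ht). apply filter_imp. intros u Hu. apply profile_D1; auto. }
  transitivity (2 * (cos t ^ 2 - sin t ^ 2) * g (cos t / sin t)
     - 2 * (cos t / sin t) * (sin t ^ 2 + cos t ^ 2) * Derive g (cos t / sin t)
     + (sin t ^ 2 + cos t ^ 2) * Derive (Derive g) (cos t / sin t) / sin t ^ 2).
  2:{ rewrite sin_cos_sq. rewrite !Rmult_1_r, !Rmult_1_l. reflexivity. }
  apply is_derive_unique. auto_derive.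
  { repeat split; try apply ex_g0; try apply ex_g1; lra. }
  eta_Derive. unfold Rdiv. field. lra.
Qed.

Lemma profile_derivable t : 0 < t < PI ->
  ex_derive p t /\ ex_derive (Derive p) t /\ ex_derive (Derive (Derive p)) t.
Proof.
  intro Ht. assert (Hs := sin_gt_0 t (proj1 Ht) (proj2 Ht)). split; [|split].
  - apply (ex_derive_ext_loc (fun u => sin u ^ 2 * g (cos u / sin u))).
    { generalize (locally_0_PI t Ht). apply filter_imp. intros u Hu. symmetry. apply Hp; auto. }
    auto_derive. repeat split; try apply ex_g0; lra.
  - apply (ex_derive_ext_loc
      (fun u => 2 * sin u * cos u * g (cos u / sin u) - Derive g (cos u / sin u))).
    { generalize (locally_0_PI t Ht). apply filter_imp. intros u Hu. symmetry.
      apply profile_D1; auto. }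
    auto_derive. repeat split; try apply ex_g0; try apply ex_g1; lra.
  - apply (ex_derive_ext_loc (fun u => 2 * (cos u ^ 2 - sin u ^ 2) * g (cos u / sin u)
       - 2 * (cos u / sin u) * Derive g (cos u / sin u)
       + Derive (Derive g) (cos u / sin u) / sin u ^ 2)).
    { generalize (locally_0_PI t Ht). apply filter_imp. intros u Hu. symmetry.
      apply profile_D2; auto. }
    auto_derive. repeat split; try apply ex_g0; try apply ex_g1; try apply ex_g2; try lra.
    intro H0. apply (pow_nonzero (sin t) 2) in H0; lra.
Qed.
End ProfileDerivatives.

(* Under the assumed form of Phi, the point (z, 1, 0) is sent to
   (phiN z, phiM z, 0), and phiN = phiM * phiZ with phiZ z = cot theta(arccot z);
   the point (z, 1, s) is sent to the rotation of a rescaled such image. *)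
Section PhiInChart.
Variables (U : R3 -> Prop) (Phi : R3 -> R3) (f h theta : R -> R).
Hypothesis Hform : forall r t ph, 0 < r -> 0 < t < PI -> U (sph r t ph) ->
     Phi (sph r t ph) = sph (sqrt (f t) / sqrt (h (theta t)) * r) (theta t) ph.

Definition phi_scale (w : R) : R :=
  sqrt (f (arccot w)) / sqrt (h (theta (arccot w))) * sqrt (1 + w^2).
Definition phiN (w : R) : R := phi_scale w * cos (theta (arccot w)).
Definition phiM (w : R) : R := phi_scale w * sin (theta (arccot w)).

Lemma Phi_chart z s : U (mk3 z 1 s) ->
  Phi (mk3 z 1 s) = mk3 (sqrt (1 + s^2) * phiN (z / sqrt (1 + s^2)))
     (phiM (z / sqrt (1 + s^2))) (s * phiM (z / sqrt (1 + s^2))).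
Proof.
  intro HU. assert (Hl := sqrt1p_pos s). set (w := z / sqrt (1 + s^2)).
  assert (Hw := sqrt1p_pos w).
  rewrite <- (sph_chart z s) in HU |- *. fold w in HU |- *.
  rewrite Hform; auto; [|apply Rmult_lt_0_compat; auto | apply arccot_bound].
  unfold sph, phiN, phiM, phi_scale. rewrite cos_atan_sq, sin_atan_sq.
  set (K := sqrt (f (arccot w)) / sqrt (h (theta (arccot w)))).
  unfold mk3. f_equal; [f_equal|]; field; lra.
Qed.

Lemma Phi_line z : U (mk3 z 1 0) -> Phi (mk3 z 1 0) = mk3 (phiN z) (phiM z) 0.
Proof.
  intro HU. rewrite Phi_chart by auto.
  replace (1 + 0^2) with 1 by ring. rewrite sqrt_1.
  replace (z / 1) with z by field. rewrite Rmult_1_l, Rmult_0_l. reflexivity.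
Qed.
End PhiInChart.

Definition phiZ (theta : R -> R) (w : R) : R :=
  cos (theta (arccot w)) / sin (theta (arccot w)).

(* Derivatives at s = 0 of the three coordinates of Phi(z, 1, s): by the
   symmetry s -> -s the first two vanish. *)
Ltac simpl_at0 := replace (1 + (0 + 0) * ((0 + 0) * 1)) with 1 by ring;
  rewrite ?sqrt_1, ?Rinv_1, ?Rmult_1_r.

Lemma is_derive_chart_x1 (phi : R -> R) z : ex_derive phi z ->
  is_derive (fun s => sqrt (1 + (0+s)^2) * phi (z / sqrt (1 + (0+s)^2))) 0 0.
Proof. intro H. auto_derive; simpl_at0; [repeat split; auto; lra|]. eta_Derive. ring. Qed.

Lemma is_derive_chart_x2 (phi : R -> R) z : ex_derive phi z ->
  is_derive (fun s => phi (z / sqrt (1 + (0+s)^2))) 0 0.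
Proof. intro H. auto_derive; simpl_at0; [repeat split; auto; lra|]. eta_Derive. ring. Qed.

Lemma is_derive_chart_x3 (phi : R -> R) z : ex_derive phi z ->
  is_derive (fun s => (0 + s) * phi (z / sqrt (1 + (0+s)^2))) 0 (phi z).
Proof. intro H. auto_derive; simpl_at0; [repeat split; auto; lra|]. eta_Derive. ring. Qed.

Lemma div_eq0 a b : b <> 0 -> (a / b = 0 <-> a = 0).
Proof.
  intro Hb. split; intro H.
  - apply (Rmult_eq_reg_r (/ b)); [rewrite Rmult_0_l; exact H | apply Rinv_neq_0_compat; auto].
  - rewrite H. unfold Rdiv. ring.
Qed.

Lemma one_plus_cot_sq s c : 0 < s -> s^2 + c^2 = 1 -> 1 + (c/s)^2 = 1 / s^2.
Proof.
  intros Hs Hsc. transitivity ((s^2 + c^2) / s^2); [field; lra|]. rewrite Hsc. reflexivity.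
Qed.

(* Elimination: with G_i = g1^(i)(z), Z, Z1 = Z(z), Z'(z), a = M'/M,
   A = M^2 g2'(Z), B = M^2 g2''(Z), the four relations coming from the
   isometry (value, derivative, e3-direction and its derivative, e1-direction)
   force the product of the two factors to vanish. *)
Lemma factorization_identity G0 G1 G2 z Z Z1 a A B : Z <> 0 -> G0 <> 0 -> Z1 <> 0 ->
  z * G1 = Z * A -> G1 = 2 * a * G0 + A * Z1 ->
  G1 - z * G2 = 2 * a * (2 * G0 - z * G1) + Z1 * A - Z * Z1 * B ->
  G2 = Z1^2 * B + 2 * a * Z1 * A + 2 * a^2 * G0 ->
  (z * Z1 - Z) * (G1 * (2 * G0 - z * G1) * Z1 - Z * (2 * G0 * G2 - G1^2)) = 0.
Proof.
  intros hZ hG hZ1 h2 h1 h4 h5.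
  assert (HA : A = z * G1 / Z) by (rewrite h2; field; auto).
  assert (Ha : a = (G1 - A * Z1) / (2 * G0)) by (rewrite h1; field; auto).
  assert (HB : B = (G2 - 2 * a * Z1 * A - 2 * a^2 * G0) / Z1^2) by (rewrite h5; field; auto).
  assert (Hiv : (G1 - z * G2) - (2 * a * (2 * G0 - z * G1) + Z1 * A - Z * Z1 * B) = 0) by lra.
  transitivity (2 * G0 * (Z * Z1 *
    ((G1 - z * G2) - (2 * a * (2 * G0 - z * G1) + Z1 * A - Z * Z1 * B)))).
  - rewrite HB, Ha, HA. field. auto.
  - rewrite Hiv. ring.
Qed.

Lemma both_factors_vanish z G0 G1 G2 Z Z1 : Z <> 0 -> G0 <> 0 ->
  z * Z1 - Z = 0 -> G1 * (2 * G0 - z * G1) * Z1 - Z * (2 * G0 * G2 - G1^2) = 0 ->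
  G1 - z * G2 = 0.
Proof.
  intros HZ HG HW HV.
  assert (HZ1 : z * Z1 = Z) by lra.
  assert (E : Z * (2 * G0 * (G1 - z * G2)) = 0).
  { transitivity (z * (G1 * (2 * G0 - z * G1) * Z1 - Z * (2 * G0 * G2 - G1^2))
                  + G1 * (2 * G0 - z * G1) * (Z - z * Z1)); [ring|].
    rewrite HV, HZ1. ring. }
  apply Rmult_integral in E. destruct E as [E|E]; [contradiction|].
  apply Rmult_integral in E. destruct E as [E|E]; [lra | exact E].
Qed.

(* Translation of the spherical quantities f, f', f'' at t (s = sin t,
   c = cos t) into the affine quantities G_i = g^(i)(cot t); see
   ProfileDerivatives. *)
Lemma spherical_numerator s c G0 G1 G2 : 0 < s ->
  let f0 := s^2 * G0 in
  let f1 := 2 * s * c * G0 - G1 in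
  let f2 := 2 * (c^2 - s^2) * G0 - 2 * (c / s) * G1 + G2 / s^2 in
  - 2 * f0 * f2 + f1 ^ 2 - 4 * f0 ^ 2 = G1^2 - 2 * G0 * G2.
Proof.
  intros Hs f0 f1 f2. unfold f0, f1, f2. field. lra.
Qed.

Lemma spherical_denominator s c G0 G1 : 0 < s -> s^2 + c^2 = 1 ->
  let f0 := s^2 * G0 in let f1 := 2 * s * c * G0 - G1 in
  (c * f1 + 2 * s * f0) * (s * f1 - 2 * c * f0) = - (s^2) * (2 * G0 - (c/s) * G1) * G1.
Proof.
  intros Hs Hsc f0 f1.
  assert (HD1 : c * f1 + 2 * s * f0 = s * (2 * G0 - (c/s) * G1)).
  { transitivity (2 * s * G0 * (s^2 + c^2) - c * G1); [unfold f0, f1; ring|].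
    rewrite Hsc. field. lra. }
  rewrite HD1. unfold f0, f1. field. lra.
Qed.

Lemma spherical_nondegeneracy s c G0 G1 G2 : 0 < s -> s^2 + c^2 = 1 ->
  let f1 := 2 * s * c * G0 - G1 in
  let f2 := 2 * (c^2 - s^2) * G0 - 2 * (c / s) * G1 + G2 / s^2 in
  - c * s * f2 + (c^2 - s^2) * f1 = G1 - (c/s) * G2.
Proof.
  intros Hs Hsc f1 f2. unfold f1, f2.
  transitivity ((s^2 + c^2) * G1 - (c/s) * G2); [field; lra|].
  rewrite Hsc. ring.
Qed.

(* With p = theta'(t), S = sin theta(t), C = cos theta(t) and
   Z'(z) = p / ((1 + z^2) S^2): the first factor vanishes iff (1) holds, ... *)
Lemma factor1_iff s c S C p : 0 < s -> 0 < S -> s^2 + c^2 = 1 -> c <> 0 ->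
  (p = C * S / (c * s) <->
   (c / s) * (p / ((1 + (c/s)^2) * S^2)) - C / S = 0).
Proof.
  intros Hs HS Hsc Hc. rewrite one_plus_cot_sq by auto.
  replace ((c / s) * (p / ((1 / s^2) * S^2)) - C / S) with ((c * s * p - C * S) / S^2)
    by (field; lra).
  rewrite div_eq0 by (apply pow_nonzero; lra).
  split; intro H.
  - rewrite H. field. lra.
  - assert (H' : C * S = c * s * p) by lra. rewrite H'. field. lra.
Qed.

(* ... and the second factor vanishes iff (2) holds. *)
Lemma factor2_iff s c S C p G0 G1 G2 : 0 < s -> 0 < S -> s^2 + c^2 = 1 ->
  G1 <> 0 -> 2 * G0 - (c/s) * G1 <> 0 ->
  let f0 := s^2 * G0 in
  let f1 := 2 * s * c * G0 - G1 in
  let f2 := 2 * (c^2 - s^2) * G0 - 2 * (c / s) * G1 + G2 / s^2 in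
  (p = (- 2 * f0 * f2 + f1 ^ 2 - 4 * f0 ^ 2) * C * S
         / ((c * f1 + 2 * s * f0) * (s * f1 - 2 * c * f0))
   <->
   G1 * (2 * G0 - (c/s) * G1) * (p / ((1 + (c/s)^2) * S^2))
     - C / S * (2 * G0 * G2 - G1^2) = 0).
Proof.
  intros Hs HS Hsc H1 H2 f0 f1 f2.
  assert (H2' : 2 * G0 * s - c * G1 <> 0).
  { intro E. apply H2.
    replace (2 * G0 - (c/s) * G1) with ((2 * G0 * s - c * G1) / s) by (field; lra).
    rewrite E. field. lra. }
  unfold f2, f0, f1.
  rewrite (spherical_numerator s c G0 G1 G2 Hs), (spherical_denominator s c G0 G1 Hs Hsc).
  rewrite one_plus_cot_sq by auto.
  replace (G1 * (2 * G0 - (c/s) * G1) * (p / ((1 / s^2) * S^2)) - C / S * (2 * G0 * G2 - G1^2))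
    with ((G1 * (2 * G0 - (c/s) * G1) * s^2 * p - C * S * (2 * G0 * G2 - G1^2)) / S^2)
    by (field; lra).
  rewrite div_eq0 by (apply pow_nonzero; lra).
  split; intro H.
  - rewrite H. field. repeat split; auto; lra.
  - assert (H' : C * S * (2 * G0 * G2 - G1^2) = G1 * (2 * G0 - (c/s) * G1) * s^2 * p) by lra.
    replace ((G1^2 - 2 * G0 * G2) * C * S) with (- (C * S * (2 * G0 * G2 - G1^2))) by ring.
    rewrite H'. field. repeat split; auto; lra.
Qed.

Section IsometryInChart.
Variables (F1 F2 : R3 -> R) (U : R3 -> Prop) (Phi : R3 -> R3) (theta : R -> R) (z0 eps : R).
Hypothesis HF1 : minkowski_norm F1.
Hypothesis HF2 : minkowski_norm F2.
Hypothesis HO1 : O2_invariant F1.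
Hypothesis HO2 : O2_invariant F2.
Hypothesis Hsm : smooth_map_on U Phi.
Hypothesis Hiso : forall x u v, U x ->
  hess_metric F1 x u v = hess_metric F2 (Phi x) (dmap Phi x u) (dmap Phi x v).
Hypothesis Hform : forall r t ph, 0 < r -> 0 < t < PI -> U (sph r t ph) ->
  Phi (sph r t ph) = sph (sqrt (prof F1 t) / sqrt (prof F2 (theta t)) * r) (theta t) ph.
Hypothesis Heps : 0 < eps.
Hypothesis Hbox : forall z s, Rabs (z - z0) < eps -> Rabs s < eps -> U (mk3 z 1 s).
Hypothesis Hth : forall z, Rabs (z - z0) < eps ->
  0 < theta (arccot z) < PI /\ ex_derive theta (arccot z) /\ Derive theta (arccot z) <> 0.

Local Notation M := (phiM (prof F1) (prof F2) theta).
Local Notation N := (phiN (prof F1) (prof F2) theta).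
Local Notation Z := (phiZ theta).
Local Notation g1 := (aprof F1).
Local Notation g2 := (aprof F2).

Let C3_1 : C3 g1 := aprof_C3 F1 (proj1 (proj2 (proj2 HF1))).
Let C3_2 : C3 g2 := aprof_C3 F2 (proj1 (proj2 (proj2 HF2))).
Let HE1 : forall a b c, 0 < b ->
  Efun F1 (mk3 a b c) = (b^2 + c^2) * g1 (a / sqrt (b^2 + c^2)) := E_from_aprof F1 HF1 HO1.
Let HE2 : forall a b c, 0 < b ->
  Efun F2 (mk3 a b c) = (b^2 + c^2) * g2 (a / sqrt (b^2 + c^2)) := E_from_aprof F2 HF2 HO2.

Lemma line_in_U z : Rabs (z - z0) < eps -> U (mk3 z 1 0).
Proof. intro H. apply Hbox; auto. rewrite Rabs_R0; auto. Qed.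

Lemma phiM_pos z : Rabs (z - z0) < eps -> 0 < M z.
Proof.
  intro H. destruct (Hth z H) as [[Ht1 Ht2] _].
  unfold phiM, phi_scale. apply Rmult_lt_0_compat; [apply Rmult_lt_0_compat|].
  - unfold Rdiv. apply Rmult_lt_0_compat; [apply sqrt_lt_R0, prof_pos; auto|].
    apply Rinv_0_lt_compat, sqrt_lt_R0, prof_pos; auto.
  - apply sqrt1p_pos.
  - apply sin_gt_0; auto.
Qed.

Lemma phiN_eq z : Rabs (z - z0) < eps -> N z = M z * Z z.
Proof.
  intro H. destruct (Hth z H) as [[Ht1 Ht2] _].
  assert (Hs := sin_gt_0 _ Ht1 Ht2).
  unfold phiN, phiM, phiZ. field. lra.
Qed.

Lemma Phi_line_box z : Rabs (z - z0) < eps -> Phi (mk3 z 1 0) = mk3 (N z) (M z) 0.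
Proof. intro H. apply (Phi_line U Phi); auto. apply line_in_U; auto. Qed.

Lemma dPhi_e1 z : Rabs (z - z0) < eps ->
  ex_derive M z /\ ex_derive N z /\
  partial 0 (fun x => coord 0 (Phi x)) (mk3 z 1 0) = Derive N z /\
  partial 0 (fun x => coord 1 (Phi x)) (mk3 z 1 0) = Derive M z /\
  partial 0 (fun x => coord 2 (Phi x)) (mk3 z 1 0) = 0.
Proof.
  intro H.
  assert (Hl : forall k, locally 0 (fun s => coord k (Phi (mk3 (z + s) 1 0)) =
     coord k (mk3 (N (z + s)) (M (z + s)) 0))).
  { intro k. generalize (locally_in_ball_shift z z0 eps H). apply filter_imp. intros s Hs.
    rewrite Phi_line_box; auto. }
  assert (Hd : forall k, (k < 3)%nat -> ex_derive (fun s => coord k (Phi (mk3 (z + s) 1 0))) 0).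
  { intros k Hk. apply (Ck_ex_partial 0 U (fun x => coord k (Phi x)) 0 (mk3 z 1 0));
      [lia | apply (Hsm k Hk) | apply line_in_U; auto]. }
  assert (EM : ex_derive M z).
  { apply ex_derive_of_shift. apply (ex_derive_ext_loc _ _ _ (Hl 1%nat)). apply Hd; lia. }
  assert (EN : ex_derive N z).
  { apply ex_derive_of_shift. apply (ex_derive_ext_loc _ _ _ (Hl 0%nat)). apply Hd; lia. }
  split; [auto|split; [auto|split; [|split]]].
  - etransitivity; [apply (Derive_ext_loc _ _ _ (Hl 0%nat))|]. apply (Derive_shift N z EN).
  - etransitivity; [apply (Derive_ext_loc _ _ _ (Hl 1%nat))|]. apply (Derive_shift M z EM).
  - etransitivity; [apply (Derive_ext_loc _ _ _ (Hl 2%nat))|].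
    cbv [coord Defs.c3 mk3 snd]. apply Derive_const.
Qed.

Lemma dPhi_e3 z : Rabs (z - z0) < eps ->
  partial 2 (fun x => coord 0 (Phi x)) (mk3 z 1 0) = 0 /\
  partial 2 (fun x => coord 1 (Phi x)) (mk3 z 1 0) = 0 /\
  partial 2 (fun x => coord 2 (Phi x)) (mk3 z 1 0) = M z.
Proof.
  intro H. destruct (dPhi_e1 z H) as (EM & EN & _).
  assert (Hl : forall k, locally 0 (fun s => coord k (Phi (mk3 z 1 (0 + s))) =
     coord k (mk3 (sqrt (1 + (0+s)^2) * N (z / sqrt (1 + (0+s)^2)))
       (M (z / sqrt (1 + (0+s)^2))) ((0 + s) * M (z / sqrt (1 + (0+s)^2)))))).
  { intro k. assert (L := locally_in_ball_shift 0 0 eps).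
    rewrite Rminus_0_r, Rabs_R0 in L.
    generalize (L Heps). apply filter_imp. intros s Hs.
    rewrite (Phi_chart U Phi (prof F1) (prof F2) theta Hform); auto.
    apply Hbox; auto. rewrite Rplus_0_l, Rminus_0_r in Hs. rewrite Rplus_0_l. exact Hs. }
  split; [|split].
  - etransitivity; [apply (Derive_ext_loc _ _ _ (Hl 0%nat))|].
    apply is_derive_unique. apply is_derive_chart_x1; auto.
  - etransitivity; [apply (Derive_ext_loc _ _ _ (Hl 1%nat))|].
    apply is_derive_unique. apply is_derive_chart_x2; auto.
  - etransitivity; [apply (Derive_ext_loc _ _ _ (Hl 2%nat))|].
    apply is_derive_unique. apply is_derive_chart_x3; auto.
Qed.

Lemma is_derive_phiZ z : Rabs (z - z0) < eps ->
  is_derive Z z (Derive theta (arccot z) / ((1 + z^2) * sin (theta (arccot z))^2)).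
Proof.
  intro H. destruct (Hth z H) as [[Ht1 Ht2] [Ed Hd]].
  assert (Hs := sin_gt_0 _ Ht1 Ht2).
  assert (E : is_derive Z z (Derive theta (arccot z) *
     (sin (theta (arccot z)) ^ 2 + cos (theta (arccot z)) ^ 2) /
     ((1 + z^2) * sin (theta (arccot z))^2))).
  { unfold phiZ. unfold arccot in *. auto_derive.
    all: replace (PI / 2 + - atan z) with (PI / 2 - atan z) by ring.
    { repeat split; auto; lra. }
    eta_Derive. field. split; [lra | nra]. }
  rewrite sin_cos_sq, Rmult_1_r in E. exact E.
Qed.

Lemma ex_derive_phiZ z : Rabs (z - z0) < eps -> ex_derive Z z.
Proof. intro H. eexists. apply is_derive_phiZ; auto. Qed.

(* The form of Phi relates the two profiles: E1 = E2 o Phi on the line. *)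
Lemma rel_value z : Rabs (z - z0) < eps -> g1 z = M z ^ 2 * g2 (Z z).
Proof.
  intro H. destruct (Hth z H) as [[Ht1 Ht2] _].
  assert (Hs := sin_gt_0 _ Ht1 Ht2).
  assert (Hpf : prof F1 (arccot z) = (1 / sqrt (1 + z^2))^2 * g1 z).
  { rewrite prof_aprof by (auto; apply arccot_bound). rewrite cot_arccot, sin_arccot. reflexivity. }
  assert (Hph : prof F2 (theta (arccot z)) = sin (theta (arccot z)) ^ 2 * g2 (Z z))
    by (rewrite prof_aprof by auto; reflexivity).
  assert (P1 := prof_pos F1 (arccot z) HF1). assert (P2 := prof_pos F2 (theta (arccot z)) HF2).
  assert (Hq := sqrt1p_pos z).
  assert (G1 : g1 z = prof F1 (arccot z) * (sqrt (1 + z^2) * sqrt (1 + z^2)))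
    by (rewrite Hpf; field; lra).
  assert (G2 : g2 (Z z) = prof F2 (theta (arccot z)) / sin (theta (arccot z)) ^ 2)
    by (rewrite Hph; field; lra).
  rewrite G1, G2. unfold phiM, phi_scale.
  set (pf := prof F1 (arccot z)) in *. set (ph := prof F2 (theta (arccot z))) in *.
  set (q := sqrt (1 + z^2)) in *. set (S := sin (theta (arccot z))) in *.
  assert (Sf := sqrt_sqrt pf (Rlt_le _ _ P1)). assert (Sh := sqrt_sqrt ph (Rlt_le _ _ P2)).
  assert (Hf := sqrt_lt_R0 _ P1). assert (Hh := sqrt_lt_R0 _ P2).
  replace ((sqrt pf / sqrt ph * q * S) ^ 2) with
    ((sqrt pf * sqrt pf) / (sqrt ph * sqrt ph) * (q * q) * S^2) by (field; lra).
  rewrite Sf, Sh. field. split; lra.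
Qed.

Lemma rel_hess_e1 z : Rabs (z - z0) < eps ->
  Derive (Derive g1) z =
  Derive (Derive g2) (Z z) * Derive N z * Derive N z
  + 2 * (Derive g2 (Z z) - Z z * Derive (Derive g2) (Z z)) * Derive N z * Derive M z
  + (2 * g2 (Z z) - 2 * Z z * Derive g2 (Z z) + Z z ^ 2 * Derive (Derive g2) (Z z))
      * Derive M z * Derive M z.
Proof.
  intro Hz. assert (HM := phiM_pos z Hz). assert (HN := phiN_eq z Hz).
  assert (H := Hiso (mk3 z 1 0) (mk3 1 0 0) (mk3 1 0 0) (line_in_U z Hz)).
  unfold hess_metric in H. rewrite hess_e1 in H.
  rewrite (hess11_plane (Efun F1) g1 HE1 C3_1 z 1 Rlt_0_1) in H.
  rewrite dmap_e1 in H. destruct (dPhi_e1 z Hz) as (_&_&h0&h1&h2).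
  rewrite h0, h1, h2, Phi_line_box, hess_plane_vector in H by auto.
  rewrite (hess11_plane (Efun F2) g2 HE2 C3_2 _ _ HM), (hess12_plane (Efun F2) g2 HE2 C3_2 _ _ HM),
    (hess21_plane (Efun F2) g2 HE2 C3_2 _ _ HM), (hess22_plane (Efun F2) g2 HE2 C3_2 _ _ HM) in H.
  replace (N z / M z) with (Z z) in H by (rewrite HN; field; lra).
  replace (z / 1) with z in H by field.
  rewrite H. ring.
Qed.

Lemma rel_hess_e3 z : Rabs (z - z0) < eps ->
  2 * g1 z - z * Derive g1 z = (2 * g2 (Z z) - Z z * Derive g2 (Z z)) * (M z * M z).
Proof.
  intro Hz. assert (HM := phiM_pos z Hz). assert (HN := phiN_eq z Hz).
  assert (H := Hiso (mk3 z 1 0) (mk3 0 0 1) (mk3 0 0 1) (line_in_U z Hz)).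
  unfold hess_metric in H. rewrite hess_e3 in H.
  rewrite (hess33_plane (Efun F1) g1 HE1 C3_1 z 1 Rlt_0_1) in H.
  rewrite dmap_e3 in H. destruct (dPhi_e3 z Hz) as (h0&h1&h2).
  rewrite h0, h1, h2, Phi_line_box, hess_axis3_vector in H by auto.
  rewrite (hess33_plane (Efun F2) g2 HE2 C3_2 _ _ HM) in H.
  replace (N z / M z) with (Z z) in H by (rewrite HN; field; lra).
  replace (z / 1) with z in H by field.
  rewrite H. ring.
Qed.

(* Derivatives of N = M Z and of the two relations above; they hold on the
   whole open box, so they may be differentiated. *)
Lemma Derive_phiN z : Rabs (z - z0) < eps -> Derive N z = Derive M z * Z z + M z * Derive Z z.
Proof.
  intro Hz. destruct (dPhi_e1 z Hz) as (EM&_).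
  assert (EZ := ex_derive_phiZ z Hz).
  rewrite (Derive_ext_loc _ (fun w => M w * Z w)).
  2:{ generalize (locally_in_ball z z0 eps Hz). apply filter_imp. intros w Hw. apply phiN_eq; auto. }
  apply is_derive_unique. auto_derive; auto. eta_Derive. ring.
Qed.

Lemma rel_value_derived z : Rabs (z - z0) < eps ->
  Derive g1 z = 2 * M z * Derive M z * g2 (Z z) + M z ^ 2 * Derive g2 (Z z) * Derive Z z.
Proof.
  intro Hz. destruct (dPhi_e1 z Hz) as (EM&_).
  assert (EZ := ex_derive_phiZ z Hz).
  rewrite (Derive_ext_loc _ (fun w => M w ^ 2 * g2 (Z w))).
  2:{ generalize (locally_in_ball z z0 eps Hz). apply filter_imp. intros w Hw.
      apply rel_value; auto. }
  apply is_derive_unique. auto_derive; [repeat split; auto; apply C3_2|]. eta_Derive. ring.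
Qed.

Lemma rel_hess_e3_derived z : Rabs (z - z0) < eps ->
  Derive g1 z - z * Derive (Derive g1) z =
  (2 * Derive g2 (Z z) * Derive Z z - (Derive Z z * Derive g2 (Z z) +
     Z z * Derive (Derive g2) (Z z) * Derive Z z)) * (M z * M z)
  + (2 * g2 (Z z) - Z z * Derive g2 (Z z)) * (2 * M z * Derive M z).
Proof.
  intro Hz. destruct (dPhi_e1 z Hz) as (EM&_).
  assert (EZ := ex_derive_phiZ z Hz).
  transitivity (Derive (fun w => 2 * g1 w - w * Derive g1 w) z).
  { symmetry. apply is_derive_unique. auto_derive; [repeat split; apply C3_1|]. eta_Derive. ring. }
  rewrite (Derive_ext_loc _ (fun w => (2 * g2 (Z w) - Z w * Derive g2 (Z w)) * (M w * M w))).
  2:{ generalize (locally_in_ball z z0 eps Hz). apply filter_imp. intros w Hw.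
      apply rel_hess_e3; auto. }
  apply is_derive_unique. auto_derive; [repeat split; auto; apply C3_2|]. eta_Derive. ring.
Qed.

(* theta(t) stays away from PI/2 wherever z = cot t is not 0 and not a
   critical point of g1: otherwise Z = 0 and the e3-relation would give
   z g1'(z) = 0. *)
Lemma cos_theta_nonzero z : Rabs (z - z0) < eps -> z <> 0 -> Derive g1 z <> 0 ->
  cos (theta (arccot z)) <> 0.
Proof.
  intros Hz Hz0 Hg1 E.
  assert (EZ : Z z = 0) by (unfold phiZ; rewrite E; unfold Rdiv; ring).
  assert (r0 := rel_value z Hz). assert (r3 := rel_hess_e3 z Hz).
  rewrite EZ in r0, r3.
  assert (E2 : z * Derive g1 z = 0) by nra.
  apply Rmult_integral in E2. destruct E2; contradiction.
Qed.

Lemma chart_factorization z : Rabs (z - z0) < eps -> cos (theta (arccot z)) <> 0 ->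
  (z * Derive Z z - Z z) *
  (Derive g1 z * (2 * g1 z - z * Derive g1 z) * Derive Z z -
   Z z * (2 * g1 z * Derive (Derive g1) z - Derive g1 z ^ 2)) = 0.
Proof.
  intros Hz Hc. destruct (Hth z Hz) as [[Ht1 Ht2] [_ Hd]].
  assert (Hs := sin_gt_0 _ Ht1 Ht2). assert (HM := phiM_pos z Hz).
  assert (HZ : Z z <> 0).
  { unfold phiZ. intro H0. apply Hc. apply (div_eq0 _ _ (Rgt_not_eq _ _ Hs)). exact H0. }
  assert (HZ1 : Derive Z z <> 0).
  { rewrite (is_derive_unique _ _ _ (is_derive_phiZ z Hz)). unfold Rdiv.
    apply Rmult_integral_contrapositive. split; auto.
    apply Rinv_neq_0_compat. apply Rmult_integral_contrapositive. split; [nra|].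
    apply pow_nonzero. lra. }
  assert (HG := aprof_pos F1 z HF1).
  assert (r0 := rel_value z Hz). assert (r1 := rel_hess_e1 z Hz).
  assert (r3 := rel_hess_e3 z Hz). assert (r0d := rel_value_derived z Hz).
  assert (r3d := rel_hess_e3_derived z Hz). assert (nd := Derive_phiN z Hz).
  apply (factorization_identity _ _ _ _ _ _ (Derive M z / M z) (M z ^ 2 * Derive g2 (Z z))
     (M z ^ 2 * Derive (Derive g2) (Z z))); auto; try lra.
  - rewrite r0d, r0. field. lra.
  - rewrite r3d, r3. field. lra.
  - rewrite r1, nd, r0. field. lra.
Qed.
End IsometryInChart.

Definition rhs1 (theta : R -> R) (t : R) : R :=
  cos (theta t) * sin (theta t) / (cos t * sin t).
Definition rhs2 (f theta : R -> R) (t : R) : R :=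
  (- 2 * f t * Derive (Derive f) t + Derive f t ^ 2 - 4 * f t ^ 2)
    * cos (theta t) * sin (theta t)
  / ((cos t * Derive f t + 2 * sin t * f t) * (sin t * Derive f t - 2 * cos t * f t)).

Section LocalDichotomy.
Variables (F1 F2 : R3 -> R) (t' t0 : R) (U : R3 -> Prop) (Phi : R3 -> R3) (theta : R -> R).
Hypothesis HF1 : minkowski_norm F1.
Hypothesis HF2 : minkowski_norm F2.
Hypothesis HO1 : O2_invariant F1.
Hypothesis HO2 : O2_invariant F2.
Hypothesis Ht' : 0 < t' < PI /\ sin t' * Derive (prof F1) t' - 2 * cos t' * prof F1 t' = 0.
Hypothesis Ht0 : 0 < t0 < PI.
Hypothesis Ht0pi : t0 <> PI / 2.
Hypothesis Ht0t' : t0 <> t'.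
Hypothesis HUy : U (sph (/ sqrt (prof F1 t0)) t0 0).
Hypothesis HUo : open U.
Hypothesis HUc : conic U.
Hypothesis Hsm : smooth_map_on U Phi.
Hypothesis Hiso : forall x u v, U x ->
  hess_metric F1 x u v = hess_metric F2 (Phi x) (dmap Phi x u) (dmap Phi x v).
Hypothesis Hth : forall t, 0 < t < PI -> U (sph 1 t 0) ->
  0 < theta t < PI /\ (forall n, ex_derive_n theta n t) /\ Derive theta t <> 0.
Hypothesis Hform : forall r t ph, 0 < r -> 0 < t < PI -> U (sph r t ph) ->
  Phi (sph r t ph) = sph (sqrt (prof F1 t) / sqrt (prof F2 (theta t)) * r) (theta t) ph.

Local Notation f := (prof F1).
Local Notation g1 := (aprof F1).
Local Notation z0 := (cos t0 / sin t0).

Let C3_1 : C3 g1 := aprof_C3 F1 (proj1 (proj2 (proj2 HF1))).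
Let f_chart t : 0 < t < PI -> f t = sin t ^ 2 * g1 (cos t / sin t) := prof_aprof F1 t HF1.
Let f'_chart : forall t, 0 < t < PI ->
  Derive f t = 2 * sin t * cos t * g1 (cos t / sin t) - Derive g1 (cos t / sin t) :=
  profile_D1 f g1 C3_1 f_chart.
Let f''_chart : forall t, 0 < t < PI ->
  Derive (Derive f) t = 2 * (cos t ^ 2 - sin t ^ 2) * g1 (cos t / sin t)
     - 2 * (cos t / sin t) * Derive g1 (cos t / sin t)
     + Derive (Derive g1) (cos t / sin t) / sin t ^ 2 :=
  profile_D2 f g1 C3_1 f_chart.

(* t' is the only angle at which g1' vanishes, by strict convexity of g1. *)
Lemma critical_angle_unique t : 0 < t < PI -> Derive g1 (cos t / sin t) = 0 -> t = t'.
Proof.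
  intros Ht Hz. destruct Ht' as [Ht'1 Ht'2].
  assert (Hs' := sin_gt_0 _ (proj1 Ht'1) (proj2 Ht'1)).
  rewrite f'_chart, f_chart in Ht'2 by auto.
  assert (E : Derive g1 (cos t' / sin t') = 0) by nra.
  rewrite <- (arccot_cot t Ht), <- (arccot_cot t' Ht'1). f_equal.
  apply (Derive_injective_of_convex g1 C3_1 (aprof_convex F1 HF1 HO1)). rewrite Hz, E. reflexivity.
Qed.

Lemma aprof_deriv_nonzero t : 0 < t < PI -> t <> t' -> Derive g1 (cos t / sin t) <> 0.
Proof. intros Ht Htt' E. apply Htt'. apply critical_angle_unique; auto. Qed.

Lemma cot_nonzero t : 0 < t < PI -> t <> PI / 2 -> cos t / sin t <> 0.
Proof.
  intros Ht Htpi E. apply Htpi. apply cos_zero_pi2; auto.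
  apply (div_eq0 _ _ (Rgt_not_eq _ _ (sin_gt_0 _ (proj1 Ht) (proj2 Ht)))). exact E.
Qed.

(* The point (z0, 1, 0) lies on the ray of y, hence in U. *)
Lemma chart_base_in_U : U (mk3 z0 1 0).
Proof.
  assert (Hs0 := sin_gt_0 _ (proj1 Ht0) (proj2 Ht0)).
  assert (Hf0 := prof_pos F1 t0 HF1).
  assert (Hq : sqrt (f t0) > 0) by (apply sqrt_lt_R0; auto).
  replace (mk3 z0 1 0) with (scal3 (sqrt (f t0) / sin t0) (sph (/ sqrt (f t0)) t0 0)).
  - apply (proj2 HUc); auto. apply Rdiv_lt_0_compat; auto.
  - unfold sph. cbv [scal3 mk3 Defs.c1 Defs.c2 Defs.c3 fst snd]. rewrite cos_0, sin_0.
    f_equal; [f_equal|]; field; lra.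
Qed.

Lemma sph_arccot_in_U z : U (mk3 z 1 0) -> U (sph 1 (arccot z) 0).
Proof.
  intro HU. rewrite sph_arccot. apply (proj2 HUc); auto.
  apply Rinv_0_lt_compat, sqrt1p_pos.
Qed.

Lemma ball_R3 (a b c a' b' c' : R) (eps : posreal) :
  Rabs (a' - a) < eps -> Rabs (b' - b) < eps -> Rabs (c' - c) < eps ->
  ball (mk3 a b c) eps (mk3 a' b' c').
Proof. intros H1 H2 H3. split; [split|]; assumption. Qed.

Lemma chart_box : exists eps, 0 < eps /\
  (forall z s, Rabs (z - z0) < eps -> Rabs s < eps -> U (mk3 z 1 s)) /\
  (forall z, Rabs (z - z0) < eps ->
     0 < theta (arccot z) < PI /\ ex_derive theta (arccot z) /\ Derive theta (arccot z) <> 0).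
Proof.
  destruct (HUo _ chart_base_in_U) as [eps Heps].
  assert (Hbox : forall z s, Rabs (z - z0) < eps -> Rabs s < eps -> U (mk3 z 1 s)).
  { intros z s Hz Hs. apply Heps. apply ball_R3; auto.
    - replace (1 - 1) with 0 by ring. rewrite Rabs_R0. apply cond_pos.
    - rewrite Rminus_0_r. auto. }
  exists eps. split; [apply cond_pos|]. split; auto.
  intros z Hz.
  assert (HU : U (sph 1 (arccot z) 0)).
  { apply sph_arccot_in_U. apply Hbox; auto. rewrite Rabs_R0. apply cond_pos. }
  destruct (Hth (arccot z) (arccot_bound z) HU) as (A & B & C).
  exact (conj A (conj (B 1%nat) C)).
Qed.

Lemma theta_at_t0 : 0 < theta t0 < PI /\ (forall n, ex_derive_n theta n t0) /\ Derive theta t0 <> 0.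
Proof.
  apply Hth; auto. rewrite <- (arccot_cot t0 Ht0). apply sph_arccot_in_U, chart_base_in_U.
Qed.

Section InBox.
Variable eps : R.
Hypothesis Heps : 0 < eps.
Hypothesis Hbox : forall z s, Rabs (z - z0) < eps -> Rabs s < eps -> U (mk3 z 1 s).
Hypothesis Hthz : forall z, Rabs (z - z0) < eps ->
  0 < theta (arccot z) < PI /\ ex_derive theta (arccot z) /\ Derive theta (arccot z) <> 0.

Lemma cos_theta_nonzero_at t : 0 < t < PI -> t <> t' -> t <> PI / 2 ->
  Rabs (cos t / sin t - z0) < eps -> cos (theta t) <> 0.
Proof.
  intros Ht Htt' Htpi Hz. rewrite <- (arccot_cot t Ht).
  apply (cos_theta_nonzero F1 F2 U Phi theta z0 eps); auto.
  - apply cot_nonzero; auto.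
  - apply aprof_deriv_nonzero; auto.
Qed.

Lemma dichotomy_at t : 0 < t < PI -> t <> t' -> t <> PI / 2 ->
  Rabs (cos t / sin t - z0) < eps ->
  Derive theta t = rhs1 theta t \/ Derive theta t = rhs2 f theta t.
Proof.
  intros Ht Htt' Htpi Hz.
  assert (Hs := sin_gt_0 _ (proj1 Ht) (proj2 Ht)).
  assert (Hct : cos t <> 0) by (intro E; apply Htpi; apply cos_zero_pi2; auto).
  assert (HT := arccot_cot t Ht).
  assert (HcTt := cos_theta_nonzero_at t Ht Htt' Htpi Hz).
  destruct (Hthz _ Hz) as [Hthz' _]. rewrite HT in Hthz'.
  assert (HSt := sin_gt_0 _ (proj1 Hthz') (proj2 Hthz')).
  assert (Hfac := chart_factorization F1 F2 U Phi theta z0 eps HF1 HF2 HO1 HO2 Hsm Hiso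
                    Hform Heps Hbox Hthz _ Hz ltac:(rewrite HT; auto)).
  rewrite (is_derive_unique _ _ _ (is_derive_phiZ theta z0 eps Hthz _ Hz)) in Hfac.
  unfold phiZ in Hfac. rewrite HT in Hfac.
  apply Rmult_integral in Hfac. destruct Hfac as [W|W].
  - left. exact (proj2 (factor1_iff _ _ _ _ _ Hs HSt (sin_cos_sq t) Hct) W).
  - right. unfold rhs2. rewrite f''_chart, f'_chart, f_chart by auto.
    apply (proj2 (factor2_iff _ _ _ _ _ _ _ _ Hs HSt (sin_cos_sq t)
      (aprof_deriv_nonzero t Ht Htt') (Rgt_not_eq _ _ (aprof_transverse F1 HF1 HO1 _)))).
    exact W.
Qed.

(* If (1) and (2) had the same right-hand side at t0, both factors would
   vanish there, forcing g1' - z0 g1'' = 0, which is the negation of the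
   nondegeneracy hypothesis. *)
Lemma rhs_distinct_in_box :
  - cos t0 * sin t0 * Derive (Derive f) t0 + (cos t0 ^ 2 - sin t0 ^ 2) * Derive f t0 <> 0 ->
  rhs1 theta t0 <> rhs2 f theta t0.
Proof.
  intros Hnd E.
  assert (Hs0 := sin_gt_0 _ (proj1 Ht0) (proj2 Ht0)).
  assert (Hc0 : cos t0 <> 0) by (intro E0; apply Ht0pi; apply cos_zero_pi2; auto).
  destruct theta_at_t0 as [Hth0 _].
  assert (HS0 := sin_gt_0 _ (proj1 Hth0) (proj2 Hth0)).
  assert (Hz0 : Rabs (z0 - z0) < eps) by (rewrite Rminus_diag_eq, Rabs_R0; auto).
  assert (HcT := cos_theta_nonzero_at t0 Ht0 Ht0t' Ht0pi Hz0).
  set (p := rhs1 theta t0) in E.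
  assert (W1 := proj1 (factor1_iff _ _ _ _ p Hs0 HS0 (sin_cos_sq t0) Hc0) eq_refl).
  unfold rhs2 in E. rewrite f''_chart, f'_chart, f_chart in E by auto.
  assert (W2 := proj1 (factor2_iff _ _ _ _ p _ _ _ Hs0 HS0 (sin_cos_sq t0)
    (aprof_deriv_nonzero t0 Ht0 Ht0t') (Rgt_not_eq _ _ (aprof_transverse F1 HF1 HO1 _))) E).
  assert (HZ : cos (theta t0) / sin (theta t0) <> 0).
  { intro E0. apply HcT. apply (div_eq0 _ _ (Rgt_not_eq _ _ HS0)). exact E0. }
  apply Hnd. rewrite f''_chart, f'_chart by auto.
  rewrite (spherical_nondegeneracy _ _ _ _ _ Hs0 (sin_cos_sq t0)).
  exact (both_factors_vanish _ _ _ _ _ _ HZ (Rgt_not_eq _ _ (aprof_pos F1 _ HF1)) W1 W2).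
Qed.
End InBox.

Lemma dichotomy_near :
  near_pt t0 (fun t => Derive theta t = rhs1 theta t \/ Derive theta t = rhs2 f theta t).
Proof.
  destruct chart_box as (eps & Heps & Hbox & Hthz).
  assert (Hs0 := sin_gt_0 _ (proj1 Ht0) (proj2 Ht0)).
  assert (Hcot : continuous (fun t => cos t / sin t) t0)
    by (apply (ex_derive_continuous (fun t => cos t / sin t)); auto_derive; lra).
  assert (Hid : continuous (fun t => t) t0) by apply continuous_id.
  apply (near_pt_imp t0 (fun t => ((0 < t < PI /\ t <> t') /\ t <> PI / 2) /\
                                  Rabs (cos t / sin t - z0) < eps)).
  - intros t (((Ht & Htt') & Htpi) & Hz). apply (dichotomy_at eps); auto.
  - apply near_pt_and; [apply near_pt_and; [apply near_pt_and|]|].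
    + apply near_pt_interval; auto.
    + apply (near_pt_neq (fun t => t)); auto.
    + apply (near_pt_neq (fun t => t)); auto.
    + apply (near_pt_continuous (fun t => cos t / sin t)); auto.
Qed.

Lemma rhs_distinct :
  - cos t0 * sin t0 * Derive (Derive f) t0 + (cos t0 ^ 2 - sin t0 ^ 2) * Derive f t0 <> 0 ->
  rhs1 theta t0 <> rhs2 f theta t0.
Proof. destruct chart_box as (eps & Heps & Hbox & Hthz). apply (rhs_distinct_in_box eps); auto. Qed.

Lemma continuous_Derive_theta : continuous (Derive theta) t0.
Proof.
  apply (ex_derive_continuous (Derive theta)). destruct theta_at_t0 as (_ & Hd & _). exact (Hd 2%nat).
Qed.

Lemma continuous_rhs1 : continuous (rhs1 theta) t0.
Proof.
  apply (ex_derive_continuous (rhs1 theta)). destruct theta_at_t0 as (_ & Hd & _).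
  assert (Hs0 := sin_gt_0 _ (proj1 Ht0) (proj2 Ht0)).
  assert (Hc0 : cos t0 <> 0) by (intro E0; apply Ht0pi; apply cos_zero_pi2; auto).
  unfold rhs1. auto_derive. repeat split; [exact (Hd 1%nat) | exact (Hd 1%nat) |].
  apply Rmult_integral_contrapositive; split; lra.
Qed.

Lemma continuous_rhs2 : continuous (rhs2 f theta) t0.
Proof.
  apply (ex_derive_continuous (rhs2 f theta)). destruct theta_at_t0 as (_ & Hd & _).
  destruct (profile_derivable f g1 C3_1 f_chart t0 Ht0) as (Ef0 & Ef1 & Ef2).
  assert (Hs0 := sin_gt_0 _ (proj1 Ht0) (proj2 Ht0)).
  assert (Hden : (cos t0 * Derive f t0 + 2 * sin t0 * f t0) *
                 (sin t0 * Derive f t0 - 2 * cos t0 * f t0) <> 0).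
  { rewrite f'_chart, f_chart by auto.
    rewrite (spherical_denominator _ _ _ _ Hs0 (sin_cos_sq t0)).
    assert (HG2 := aprof_transverse F1 HF1 HO1 z0).
    assert (HG1 := aprof_deriv_nonzero t0 Ht0 Ht0t').
    apply Rmult_integral_contrapositive. split; auto.
    apply Rmult_integral_contrapositive. split; [|lra].
    apply Ropp_neq_0_compat; apply pow_nonzero; lra. }
  unfold rhs2. auto_derive. repeat split; auto; exact (Hd 1%nat).
Qed.
End LocalDichotomy.

Theorem lemma3p5 (F1 F2 : R3 -> R) (t' t0 : R) (U : R3 -> Prop)
  (Phi : R3 -> R3) (theta : R -> R) :
  minkowski_norm F1 -> minkowski_norm F2 ->
  O2_invariant F1 -> O2_invariant F2 ->
  let f := prof F1 in
  let h := prof F2 in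
  let f' := Derive f in
  let f'' := Derive (Derive f) in
  (0 < t' < PI /\ sin t' * f' t' - 2 * cos t' * f t' = 0) ->
  0 < t0 < PI -> t0 <> PI / 2 -> t0 <> t' ->
  - cos t0 * sin t0 * f'' t0 + (cos t0 ^ 2 - sin t0 ^ 2) * f' t0 <> 0 ->
  U (sph (/ sqrt (f t0)) t0 0) ->
  SO2_invariant_set U ->
  local_hessian_isometry F1 F2 U Phi ->
  (forall t, 0 < t < PI -> U (sph 1 t 0) ->
     0 < theta t < PI /\ (forall n, ex_derive_n theta n t) /\ Derive theta t <> 0) ->
  (forall r t ph, 0 < r -> 0 < t < PI -> U (sph r t ph) ->
     Phi (sph r t ph) = sph (sqrt (f t) / sqrt (h (theta t)) * r) (theta t) ph) ->
  let P1 t := Derive theta t = cos (theta t) * sin (theta t) / (cos t * sin t) in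
  let P2 t := Derive theta t =
      (- 2 * f t * f'' t + f' t ^ 2 - 4 * f t ^ 2) * cos (theta t) * sin (theta t)
      / ((cos t * f' t + 2 * sin t * f t) * (sin t * f' t - 2 * cos t * f t)) in
  (near_pt t0 P1 /\ ~ near_pt t0 P2) \/ (near_pt t0 P2 /\ ~ near_pt t0 P1).
Proof.
  intros HF1 HF2 HO1 HO2 f h f' f'' Ht' Ht0 Ht0pi Ht0t' Hnd HUy _ Hiso Hth Hform P1 P2.
  subst f h f' f'' P1 P2.
  destruct Hiso as (V & Q & HUo & _ & HUc & _ & _ & _ & _ & _ & Hsm & _ & _ & Hmetric).
  apply (near_exclusive (Derive theta) (rhs1 theta) (rhs2 (prof F1) theta)).
  - apply (continuous_Derive_theta F1 t0 U theta); assumption.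
  - apply (continuous_rhs1 F1 t0 U theta); assumption.
  - apply (continuous_rhs2 F1 t' t0 U theta); assumption.
  - apply (rhs_distinct F1 F2 t' t0 U Phi theta); assumption.
  - apply (dichotomy_near F1 F2 t' t0 U Phi theta); assumption.
Qed.
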